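(* Let $\Sigma=(X,\mathcal{U},\phi)$ be an ordered control system which is monotone (with respect to states and inputs), and let $\mathcal{U}_c\subseteq\mathcal{U}$. Assume: (i) there exists $\rho\in\mathcal{K}_\infty$ such that for all $x_-,x,x_+\in X$ with $x_-\le x\le x_+$ one has $\|x\|_X\le\rho(\|x_-\|_X+\|x_+\|_X)$; (ii) there exist $\eta,\xi\in\mathcal{K}_\infty$ such that for every $x\in X$, every $u\in\mathcal{U}(x)$ and every $\varepsilon>0$ there exist $x_-,x_+\in X$, $u_-\in\mathcal{U}(x_-)\cap\mathcal{U}_c$, $u_+\in\mathcal{U}(x_+)\cap\mathcal{U}_c$ with $x_-\le x\le x_+$, $u_-\le u\le u_+$, $\max(\|u_-\|_{\mathcal{U}},\|u_+\|_{\mathcal{U}})\le\eta(\|u\|_{\mathcal{U}}+\varepsilon)$ and $\max(\|x_-\|_X,\|x_+\|_X)\le\xi(\|x\|_X+\|u\|_{\mathcal{U}}+\varepsilon)$. Then $\Sigma$ is ISS if and only if $\Sigma$ is ISS with respect to inputs in $\mathcal{U}_c$. Moreover, if $\rho$ and $\xi$ are linear, then $\Sigma$ is exp-ISS if and only if $\Sigma$ is exp-ISS with respect to inputs in $\mathcal{U}_c$; and if in addition $\Sigma$ is exp-ISS w.r.t. inputs in $\mathcal{U}_c$ with a linear gain function and $\eta$ is linear, then $\Sigma$ is exp-ISS with a linear gain function.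
   Context: Comparison functions: $\mathcal{K}$ is the set of continuous strictly increasing $\gamma:\mathbb{R}_+\to\mathbb{R}_+$ with $\gamma(0)=0$; $\mathcal{K}_\infty$ the unbounded functions in $\mathcal{K}$; $\mathcal{L}$ the continuous decreasing $\gamma:\mathbb{R}_+\to\mathbb{R}_+$ with $\gamma(t)\to0$; $\mathcal{KL}$ the functions $\beta:\mathbb{R}_+^2\to\mathbb{R}_+$ with $\beta(\cdot,t)\in\mathcal{K}$ for all $t\ge0$ and $\beta(r,\cdot)\in\mathcal{L}$ for all $r>0$. A control system $\Sigma=(X,\mathcal{U},\phi)$ consists of a normed linear space $X$ (state space), a set $U$ of input values (nonempty subset of a normed linear space), a normed linear space $\mathcal{U}$ of functions $\mathbb{R}_+\to U$ closed under time shifts $u\mapsto u(\cdot+\tau)$, nonempty sets $\mathcal{U}(x)\subseteq\mathcal{U}$ of admissible inputs for each $x\in X$, and a map $\phi$ such that for every $x\in X$, $u\in\mathcal{U}(x)$ and $t\ge0$ the state $\phi(t,x,u)\in X$ is defined, $\phi(0,x,u)=x$, $\phi(t,x,u)=\phi(t,x,\tilde u)$ whenever $\tilde u\in\mathcal{U}(x)$ agrees with $u$ on $[0,t]$, and $u(t+\cdot)\in\mathcal{U}(\phi(t,x,u))$ with $\phi(h,\phi(t,x,u),u(t+\cdot))=\phi(t+h,x,u)$ for all $t,h\ge0$. A positive cone in a normed linear space $X$ is a set $K$ with $K\cap(-K)=\{0\}$, $ax\in K$ and $x+y\in K$ for all $a\ge0$, $x,y\in K$; it induces the order $x\le y\iff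 y-x\in K$. The system is ordered if $X$ and $\mathcal{U}$ carry such orders. It is monotone if for all $t\ge0$, all $x_1\le x_2$ in $X$ and all $u_1\in\mathcal{U}(x_1)$, $u_2\in\mathcal{U}(x_2)$ with $u_1\le u_2$ one has $\phi(t,x_1,u_1)\le\phi(t,x_2,u_2)$. For $\mathcal{U}_c\subseteq\mathcal{U}$, $\Sigma$ is ISS with respect to inputs in $\mathcal{U}_c$ if there exist $\beta\in\mathcal{KL}$, $\gamma\in\mathcal{K}$ such that $\|\phi(t,x,u)\|_X\le\beta(\|x\|_X,t)+\gamma(\|u\|_{\mathcal{U}})$ for all $t\ge0$, all $x\in X$ and all $u\in\mathcal{U}(x)\cap\mathcal{U}_c$; ISS means ISS w.r.t. inputs in $\mathcal{U}$. $\Sigma$ is exp-ISS w.r.t. inputs in $\mathcal{U}_c$ if there exist constants $M,a>0$ and $\gamma\in\mathcal{K}_\infty$ with $\|\phi(t,x,u)\|_X\le Me^{-at}\|x\|_X+\gamma(\|u\|_{\mathcal{U}})$ for the same range of $t,x,u$; exp-ISS means exp-ISS w.r.t. inputs in $\mathcal{U}$; ''with a linear gain function'' means $\gamma$ can be chosen linear. *)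

From Stdlib Require Import Reals.
Open Scope R_scope.

Record NormedSpace := {
  ns_car :> Type;
  ns_zero : ns_car;
  ns_add : ns_car -> ns_car -> ns_car;
  ns_opp : ns_car -> ns_car;
  ns_scal : R -> ns_car -> ns_car;
  ns_norm : ns_car -> R;
  ns_addA : forall x y z, ns_add x (ns_add y z) = ns_add (ns_add x y) z;
  ns_addC : forall x y, ns_add x y = ns_add y x;
  ns_add0 : forall x, ns_add x ns_zero = x;
  ns_addN : forall x, ns_add x (ns_opp x) = ns_zero;
  ns_scalA : forall a b x, ns_scal a (ns_scal b x) = ns_scal (a * b) x;
  ns_scal1 : forall x, ns_scal 1 x = x;
  ns_scalDr : forall a x y, ns_scal a (ns_add x y) = ns_add (ns_scal a x) (ns_scal a y);
  ns_scalDl : forall a b x, ns_scal (a + b) x = ns_add (ns_scal a x) (ns_scal b x);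
  ns_norm_nonneg : forall x, 0 <= ns_norm x;
  ns_norm_eq0 : forall x, ns_norm x = 0 -> x = ns_zero;
  ns_normZ : forall a x, ns_norm (ns_scal a x) = Rabs a * ns_norm x;
  ns_norm_triangle : forall x y, ns_norm (ns_add x y) <= ns_norm x + ns_norm y
}.

Arguments ns_zero {n}.
Arguments ns_add {n}.
Arguments ns_opp {n}.
Arguments ns_scal {n}.
Arguments ns_norm {n}.

Record Cone (N : NormedSpace) := {
  cone_set : N -> Prop;
  cone_pointed : forall x, cone_set x -> cone_set (ns_opp x) -> x = ns_zero;
  cone_scal : forall a x, 0 <= a -> cone_set x -> cone_set (ns_scal a x);
  cone_add : forall x y, cone_set x -> cone_set y -> cone_set (ns_add x y)
}.

Arguments cone_set {N}.

Definition cone_le {N : NormedSpace} (K : Cone N) (x y : N) : Prop :=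
  cone_set K (ns_add y (ns_opp x)).

(** * Control systems Sigma = (X, Ucal, phi)
    - [cs_X] : the state space X (normed linear space);
    - [cs_V] : normed linear space containing the set [cs_Uval] = U of input values;
    - [cs_W] : the normed linear space Ucal of input functions R_+ -> U; its
      elements are identified with functions via [cs_eval] (linear, injective
      on R_+, so Ucal is a linear space of functions with pointwise operations);
    - [cs_shift tau u] = u(. + tau);
    - [cs_adm x] = Ucal(x), the admissible inputs at x;
    - [cs_phi t x u] = phi(t,x,u). *)
Record ControlSystem := {
  cs_X : NormedSpace;
  cs_V : NormedSpace;
  cs_Uval : cs_V -> Prop;
  cs_Uval_nonempty : exists v, cs_Uval v;
  cs_W : NormedSpace;
  cs_eval : cs_W -> R -> cs_V;
  cs_eval_add : forall u w s, 0 <= s ->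
     cs_eval (ns_add u w) s = ns_add (cs_eval u s) (cs_eval w s);
  cs_eval_scal : forall a u s, 0 <= s ->
     cs_eval (ns_scal a u) s = ns_scal a (cs_eval u s);
  cs_eval_inj : forall u w, (forall s, 0 <= s -> cs_eval u s = cs_eval w s) -> u = w;
  cs_eval_val : forall u s, 0 <= s -> cs_Uval (cs_eval u s);
  cs_shift : R -> cs_W -> cs_W;
  cs_shift_spec : forall tau u s, 0 <= tau -> 0 <= s ->
     cs_eval (cs_shift tau u) s = cs_eval u (s + tau);
  cs_adm : cs_X -> cs_W -> Prop;
  cs_adm_nonempty : forall x, exists u, cs_adm x u;
  cs_phi : R -> cs_X -> cs_W -> cs_X;
  cs_phi0 : forall x u, cs_adm x u -> cs_phi 0 x u = x;
  cs_causal : forall t x u u', 0 <= t -> cs_adm x u -> cs_adm x u' ->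
     (forall s, 0 <= s <= t -> cs_eval u s = cs_eval u' s) ->
     cs_phi t x u = cs_phi t x u';
  cs_cocycle_adm : forall t x u, 0 <= t -> cs_adm x u ->
     cs_adm (cs_phi t x u) (cs_shift t u);
  cs_cocycle : forall t h x u, 0 <= t -> 0 <= h -> cs_adm x u ->
     cs_phi h (cs_phi t x u) (cs_shift t u) = cs_phi (t + h) x u
}.

(** * Comparison functions (functions R -> R, only their values on R_+ matter) *)
Definition cont_on_Rplus (g : R -> R) : Prop :=
  forall r, 0 <= r -> forall eps, 0 < eps -> exists delta, 0 < delta /\
    forall s, 0 <= s -> Rabs (s - r) < delta -> Rabs (g s - g r) < eps.

Definition classK (g : R -> R) : Prop :=
  cont_on_Rplus g /\ g 0 = 0 /\
  (forall r, 0 <= r -> 0 <= g r) /\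
  (forall r s, 0 <= r -> r < s -> g r < g s).

Definition classKinf (g : R -> R) : Prop :=
  classK g /\ (forall M, exists r, 0 <= r /\ M < g r).

Definition classL (g : R -> R) : Prop :=
  cont_on_Rplus g /\ (forall r, 0 <= r -> 0 <= g r) /\
  (forall r s, 0 <= r -> r <= s -> g s <= g r) /\
  (forall eps, 0 < eps -> exists T, 0 <= T /\ forall t, T <= t -> g t < eps).

Definition classKL (b : R -> R -> R) : Prop :=
  (forall t, 0 <= t -> classK (fun r => b r t)) /\
  (forall r, 0 < r -> classL (fun t => b r t)).

Definition linear_fun (g : R -> R) : Prop :=
  exists c, forall r, 0 <= r -> g r = c * r.

Definition monotone (S : ControlSystem) (KX : Cone (cs_X S)) (KU : Cone (cs_W S)) : Prop :=
  forall t x1 x2 u1 u2, 0 <= t ->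
    cone_le KX x1 x2 -> cs_adm S x1 u1 -> cs_adm S x2 u2 -> cone_le KU u1 u2 ->
    cone_le KX (cs_phi S t x1 u1) (cs_phi S t x2 u2).

Definition ISS_wrt (S : ControlSystem) (Uc : cs_W S -> Prop) : Prop :=
  exists beta gamma, classKL beta /\ classK gamma /\
    forall t x u, 0 <= t -> cs_adm S x u -> Uc u ->
      ns_norm (cs_phi S t x u) <= beta (ns_norm x) t + gamma (ns_norm u).

Definition ISS (S : ControlSystem) : Prop := ISS_wrt S (fun _ => True).

Definition expISS_wrt (S : ControlSystem) (Uc : cs_W S -> Prop) : Prop :=
  exists M a gamma, 0 < M /\ 0 < a /\ classKinf gamma /\
    forall t x u, 0 <= t -> cs_adm S x u -> Uc u ->
      ns_norm (cs_phi S t x u) <= M * exp (- a * t) * ns_norm x + gamma (ns_norm u).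

Definition expISS (S : ControlSystem) : Prop := expISS_wrt S (fun _ => True).

Definition expISS_lin_wrt (S : ControlSystem) (Uc : cs_W S -> Prop) : Prop :=
  exists M a gamma, 0 < M /\ 0 < a /\ classKinf gamma /\ linear_fun gamma /\
    forall t x u, 0 <= t -> cs_adm S x u -> Uc u ->
      ns_norm (cs_phi S t x u) <= M * exp (- a * t) * ns_norm x + gamma (ns_norm u).

Definition expISS_lin (S : ControlSystem) : Prop := expISS_lin_wrt S (fun _ => True).

(* Sandwich a trajectory with arbitrary input between two trajectories with inputs in
   [Uc]: by monotonicity and (ii), phi(t,x-,u-) <= phi(t,x,u) <= phi(t,x+,u+), so (i)
   bounds |phi(t,x,u)| by rho of the sum of the norms of the two outer trajectories, and
   the ISS estimate for inputs in [Uc] applies to these, with initial states of norm at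
   most xi(|x| + |u| + eps) and inputs of norm at most eta(|u| + eps).  Splitting the
   resulting comparison functions with g(a + b) <= g(2a) + g(2b) and letting eps -> 0
   gives an ISS estimate; when rho and xi are linear the exponential decay rate survives. *)
From Stdlib Require Import Reals Lra.
Open Scope R_scope.

Lemma classK_ge0 g r : classK g -> 0 <= r -> 0 <= g r.
Proof. intros [_ [_ [Hg _]]]; auto. Qed.

Lemma classK_le g r s : classK g -> 0 <= r -> r <= s -> g r <= g s.
Proof.
  intros [_ [_ [_ Hg]]] hr hrs.
  destruct (Rle_lt_or_eq_dec r s hrs) as [h | ->]; [left; auto | lra].
Qed.

Lemma classK_add_le g a b : classK g -> 0 <= a -> 0 <= b ->
  g (a + b) <= g (2 * a) + g (2 * b).
Proof.
  intros Hg ha hb.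
  assert (0 <= g (2 * a)) by (apply classK_ge0; auto; lra).
  assert (0 <= g (2 * b)) by (apply classK_ge0; auto; lra).
  destruct (Rle_dec a b).
  - assert (g (a + b) <= g (2 * b)) by (apply classK_le; auto; lra). lra.
  - assert (g (a + b) <= g (2 * a)) by (apply classK_le; auto; lra). lra.
Qed.

Lemma classK_linear_slope_gt0 g c : classK g -> (forall r, 0 <= r -> g r = c * r) -> 0 < c.
Proof.
  intros [_ [g0 [_ Hg]]] Hc.
  specialize (Hg 0 1 (Rle_refl 0) Rlt_0_1). rewrite g0, Hc in Hg; lra.
Qed.

Lemma cont_on_Rplus_id : cont_on_Rplus (fun r => r).
Proof. intros r _ e he. exists e; split; auto. Qed.

Lemma cont_on_Rplus_comp f g : cont_on_Rplus f -> (forall r, 0 <= r -> 0 <= f r) ->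
  cont_on_Rplus g -> cont_on_Rplus (fun r => g (f r)).
Proof.
  intros Hf Hf0 Hg r hr e he.
  destruct (Hg (f r) (Hf0 r hr) e he) as [d1 [hd1 Hd1]].
  destruct (Hf r hr d1 hd1) as [d [hd Hd]].
  exists d; split; auto.
Qed.

Lemma cont_on_Rplus_scal c f : cont_on_Rplus f -> cont_on_Rplus (fun r => c * f r).
Proof.
  intros Hf r hr e he.
  assert (hc : 0 <= Rabs c) by apply Rabs_pos.
  destruct (Hf r hr (e / (Rabs c + 1))) as [d [hd Hd]]; [apply Rdiv_lt_0_compat; lra|].
  exists d; split; auto. intros s hs hsr.
  replace (c * f s - c * f r) with (c * (f s - f r)) by ring.
  rewrite Rabs_mult.
  assert (hd' : Rabs (f s - f r) * (Rabs c + 1) < e).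
  { replace e with (e / (Rabs c + 1) * (Rabs c + 1)) by (field; lra).
    apply Rmult_lt_compat_r; auto; lra. }
  pose proof (Rabs_pos (f s - f r)). nra.
Qed.

Lemma cont_on_Rplus_add f g : cont_on_Rplus f -> cont_on_Rplus g ->
  cont_on_Rplus (fun r => f r + g r).
Proof.
  intros Hf Hg r hr e he.
  destruct (Hf r hr (e / 2)) as [d1 [hd1 Hd1]]; [lra|].
  destruct (Hg r hr (e / 2)) as [d2 [hd2 Hd2]]; [lra|].
  exists (Rmin d1 d2); split; [apply Rmin_pos; auto|].
  intros s hs hsr.
  pose proof (Hd1 s hs (Rlt_le_trans _ _ _ hsr (Rmin_l _ _))).
  pose proof (Hd2 s hs (Rlt_le_trans _ _ _ hsr (Rmin_r _ _))).
  replace (f s + g s - (f r + g r)) with ((f s - f r) + (g s - g r)) by ring.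
  eapply Rle_lt_trans; [apply Rabs_triang | lra].
Qed.

Lemma cont_on_Rplus_le_eps g a b s : cont_on_Rplus g -> 0 <= s ->
  (forall e, 0 < e -> a <= b + g (s + e)) -> a <= b + g s.
Proof.
  intros Hg hs H.
  destruct (Rle_dec a (b + g s)) as [h | h]; auto. exfalso.
  destruct (Hg s hs (a - b - g s)) as [d [hd Hd]]; [lra|].
  specialize (H (d / 2) ltac:(lra)).
  assert (hd2 : Rabs (s + d / 2 - s) < d).
  { replace (s + d / 2 - s) with (d / 2) by ring. rewrite Rabs_right; lra. }
  specialize (Hd (s + d / 2) ltac:(lra) hd2). apply Rabs_def2 in Hd. lra.
Qed.

Lemma classK_id : classK (fun r => r).
Proof. repeat split; auto using cont_on_Rplus_id. Qed.

Lemma classK_comp f g : classK f -> classK g -> classK (fun r => g (f r)).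
Proof.
  intros Hf Hg. pose proof Hf as [cf [f0 [f_ge0 f_lt]]]. pose proof Hg as [cg [g0 [g_ge0 g_lt]]].
  split; [apply cont_on_Rplus_comp; auto|].
  split; [rewrite f0; auto|].
  split; [auto|]. intros r s hr hrs. apply g_lt; auto.
Qed.

Lemma classK_scal c f : 0 < c -> classK f -> classK (fun r => c * f r).
Proof.
  intros hc [cf [f0 [f_ge0 f_lt]]].
  split; [apply cont_on_Rplus_scal; auto|].
  split; [rewrite f0; ring|].
  split; [intros r hr; apply Rmult_le_pos; [lra | auto]|].
  intros r s hr hrs. apply Rmult_lt_compat_l; auto.
Qed.

Lemma classK_add f g : classK f -> classK g -> classK (fun r => f r + g r).
Proof.
  intros [cf [f0 [f_ge0 f_lt]]] [cg [g0 [g_ge0 g_lt]]].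
  split; [apply cont_on_Rplus_add; auto|].
  split; [rewrite f0, g0; ring|].
  split; [intros r hr; specialize (f_ge0 r hr); specialize (g_ge0 r hr); lra|].
  intros r s hr hrs. specialize (f_lt r s hr hrs); specialize (g_lt r s hr hrs); lra.
Qed.

Lemma classKinf_of_ge_linear g c : classK g -> 0 < c ->
  (forall r, 0 <= r -> c * r <= g r) -> classKinf g.
Proof.
  intros Hg hc Hle. split; [exact Hg|]. intros M.
  assert (0 <= Rabs M / c)
    by (apply Rmult_le_pos; [apply Rabs_pos | left; apply Rinv_0_lt_compat; lra]).
  exists (Rabs M / c + 1). split; [lra|].
  specialize (Hle (Rabs M / c + 1) ltac:(lra)).
  replace (c * (Rabs M / c + 1)) with (Rabs M + c) in Hle by (field; lra).
  pose proof (Rle_abs M). lra.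
Qed.

Lemma classL_compK f g : classL f -> classK g -> classL (fun t => g (f t)).
Proof.
  intros [cf [f_ge0 [f_le f_lim]]] Hg. pose proof Hg as [cg [g0 [g_ge0 _]]].
  split; [apply cont_on_Rplus_comp; auto|].
  split; [auto|].
  split; [intros r s hr hrs; apply classK_le; auto; apply f_ge0; lra|].
  intros e he.
  destruct (cg 0 (Rle_refl 0) e he) as [d [hd Hd]].
  destruct (f_lim d hd) as [T [hT HT]].
  exists T; split; auto. intros t ht.
  assert (h0 : 0 <= f t) by (apply f_ge0; lra).
  assert (hft : Rabs (f t - 0) < d) by (rewrite Rminus_0_r, Rabs_right; [apply HT|]; lra).
  specialize (Hd (f t) h0 hft). rewrite g0, Rminus_0_r in Hd.
  apply Rabs_def2 in Hd. lra.
Qed.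

Lemma classKL_comp b f h : classKL b -> classK f -> classK h ->
  classKL (fun r t => h (b (f r) t)).
Proof.
  intros [bK bL] Hf Hh. split.
  - intros t ht. apply (classK_comp (fun r => b (f r) t) h); auto.
    apply (classK_comp f (fun c => b c t)); auto.
  - intros r hr. apply (classL_compK (fun t => b (f r) t) h); auto.
    apply bL. destruct Hf as [_ [f0 [_ f_lt]]]. rewrite <- f0. apply f_lt; lra.
Qed.

Lemma classKL_ge0 b r t : classKL b -> 0 <= r -> 0 <= t -> 0 <= b r t.
Proof. intros Hb hr ht. exact (classK_ge0 (fun c => b c t) r (proj1 Hb t ht) hr). Qed.

Lemma classKL_le_t0 b c t : classKL b -> 0 <= c -> 0 <= t -> b c t <= b c 0.
Proof.
  intros [bK bL] hc ht.
  destruct (Rle_lt_or_eq_dec 0 c hc) as [h | <-].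
  - destruct (bL c h) as [_ [_ [Hle _]]]. apply Hle; lra.
  - destruct (bK t ht) as [_ [-> _]]. destruct (bK 0 (Rle_refl 0)) as [_ [-> _]]. lra.
Qed.

Lemma classKL_split b xi r s t : classKL b -> classK xi -> 0 <= r -> 0 <= s -> 0 <= t ->
  b (xi (r + s)) t <= b (2 * xi (2 * r)) t + b (2 * xi (2 * s)) 0.
Proof.
  intros Hb Hxi hr hs ht.
  pose proof (proj1 Hb t ht) as HbK.
  assert (0 <= xi (2 * r)) by (apply classK_ge0; auto; lra).
  assert (0 <= xi (2 * s)) by (apply classK_ge0; auto; lra).
  apply Rle_trans with (b (xi (2 * r) + xi (2 * s)) t).
  { apply (classK_le (fun c => b c t)); auto;
      [apply classK_ge0; auto; lra | apply classK_add_le; auto]. }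
  eapply Rle_trans; [apply (classK_add_le (fun c => b c t)); auto|].
  apply Rplus_le_compat_l, classKL_le_t0; auto; lra.
Qed.

Lemma classK_dilate f : classK f -> classK (fun r => 2 * f (2 * r)).
Proof.
  intros Hf. apply (classK_scal 2 (fun r => f (2 * r))); [lra|].
  apply (classK_comp (fun r => 2 * r) f); auto. apply classK_scal; [lra | apply classK_id].
Qed.

Lemma classKL_estimate_split b rho xi r s t y :
  classKL b -> classK rho -> classK xi -> 0 <= r -> 0 <= s -> 0 <= t -> 0 <= y ->
  rho (2 * (b (xi (r + s)) t + y)) <=
    rho (4 * b (2 * xi (2 * r)) t) + rho (4 * b (2 * xi (2 * s)) 0 + 4 * y).
Proof.
  intros Hb Hrho Hxi hr hs ht hy.
  pose proof (classK_ge0 _ r (classK_dilate xi Hxi) hr) as hxr.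
  pose proof (classK_ge0 _ s (classK_dilate xi Hxi) hs) as hxs.
  cbv beta in hxr, hxs.
  set (A := 2 * b (2 * xi (2 * r)) t).
  set (B := 2 * b (2 * xi (2 * s)) 0 + 2 * y).
  assert (hA : 0 <= A) by (apply Rmult_le_pos; [lra | apply classKL_ge0; auto]).
  assert (hB : 0 <= B).
  { assert (0 <= b (2 * xi (2 * s)) 0) by (apply classKL_ge0; auto; lra). unfold B; lra. }
  assert (hsplit : b (xi (r + s)) t <= b (2 * xi (2 * r)) t + b (2 * xi (2 * s)) 0)
    by (apply classKL_split; auto).
  apply Rle_trans with (rho (A + B)).
  { apply (classK_le rho); auto; [|unfold A, B; lra].
    assert (0 <= b (xi (r + s)) t) by (apply classKL_ge0; auto; apply classK_ge0; auto; lra). lra. }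
  eapply Rle_trans; [apply (classK_add_le rho); auto|].
  unfold A, B. right. do 2 f_equal; ring.
Qed.

Lemma exp_neg_le1 a t : 0 <= a -> 0 <= t -> exp (- a * t) <= 1.
Proof.
  intros ha ht. rewrite <- exp_0.
  destruct (Rle_lt_or_eq_dec 0 (a * t) (Rmult_le_pos _ _ ha ht)) as [h | h].
  - left. apply exp_increasing. lra.
  - right. f_equal. lra.
Qed.

Lemma ISS_wrt_of_ISS S Uc : ISS S -> ISS_wrt S Uc.
Proof. intros (b & g & hb & hg & H). exists b, g. split; [|split]; auto. Qed.

Lemma expISS_wrt_of_expISS S Uc : expISS S -> expISS_wrt S Uc.
Proof. intros (M & a & g & hM & ha & hg & H). exists M, a, g. do 3 (split; auto). Qed.

Section MonotoneSandwich.

Variables (S : ControlSystem) (KX : Cone (cs_X S)) (KU : Cone (cs_W S)).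
Variables (Uc : cs_W S -> Prop) (rho eta xi : R -> R).
Hypothesis Hmono : monotone S KX KU.
Hypotheses (Krho : classK rho) (Keta : classK eta) (Kxi : classK xi).
Hypothesis Hi : forall xm x xp : cs_X S, cone_le KX xm x -> cone_le KX x xp ->
  ns_norm x <= rho (ns_norm xm + ns_norm xp).
Hypothesis Hii : forall (x : cs_X S) (u : cs_W S) (eps : R), cs_adm S x u -> 0 < eps ->
  exists (xm xp : cs_X S) (um up : cs_W S),
    cs_adm S xm um /\ Uc um /\ cs_adm S xp up /\ Uc up /\
    cone_le KX xm x /\ cone_le KX x xp /\
    cone_le KU um u /\ cone_le KU u up /\
    Rmax (ns_norm um) (ns_norm up) <= eta (ns_norm u + eps) /\
    Rmax (ns_norm xm) (ns_norm xp) <= xi (ns_norm x + ns_norm u + eps).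

Lemma norm_phi_le_of_Uc_bound (F : R -> R -> R -> R) :
  (forall t r r' s s', 0 <= t -> 0 <= r -> r <= r' -> 0 <= s -> s <= s' ->
     F t r s <= F t r' s') ->
  (forall t x u, 0 <= t -> cs_adm S x u -> Uc u ->
     ns_norm (cs_phi S t x u) <= F t (ns_norm x) (ns_norm u)) ->
  forall t x u e, 0 <= t -> cs_adm S x u -> 0 < e ->
  ns_norm (cs_phi S t x u) <=
    rho (2 * F t (xi (ns_norm x + ns_norm u + e)) (eta (ns_norm u + e))).
Proof.
  intros F_le HF t x u e ht hadm he.
  destruct (Hii x u e hadm he) as
    (xm & xp & um & up & adm_m & Uc_m & adm_p & Uc_p & xm_le & le_xp & um_le & le_up & Hu & Hx).
  set (B := F t (xi (ns_norm x + ns_norm u + e)) (eta (ns_norm u + e))).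
  assert (HB : forall y w, cs_adm S y w -> Uc w ->
            ns_norm y <= xi (ns_norm x + ns_norm u + e) -> ns_norm w <= eta (ns_norm u + e) ->
            ns_norm (cs_phi S t y w) <= B).
  { intros y w hyw hw hy hw'. eapply Rle_trans; [apply HF; auto|].
    apply F_le; auto using ns_norm_nonneg. }
  assert (Hm : ns_norm (cs_phi S t xm um) <= B).
  { apply HB; auto;
      [apply (Rle_trans _ _ _ (Rmax_l _ _) Hx) | apply (Rle_trans _ _ _ (Rmax_l _ _) Hu)]. }
  assert (Hp : ns_norm (cs_phi S t xp up) <= B).
  { apply HB; auto;
      [apply (Rle_trans _ _ _ (Rmax_r _ _) Hx) | apply (Rle_trans _ _ _ (Rmax_r _ _) Hu)]. }
  eapply Rle_trans; [apply Hi; apply Hmono; eauto|].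
  apply classK_le; auto; [|lra].
  apply Rplus_le_le_0_compat; apply ns_norm_nonneg.
Qed.

Lemma ISS_of_ISS_wrt : ISS_wrt S Uc -> ISS S.
Proof.
  intros (b & g & Hb & Hg & HUc).
  pose proof (classK_dilate xi Kxi) as Kxi2.
  set (gain := fun s => rho (4 * b (2 * xi (2 * s)) 0 + 4 * g (eta s))).
  assert (Kgain : classK gain).
  { apply (classK_comp _ rho); auto.
    apply (classK_add (fun s => 4 * b (2 * xi (2 * s)) 0) (fun s => 4 * g (eta s))).
    - apply (classK_scal 4 (fun s => b (2 * xi (2 * s)) 0)); [lra|].
      apply (classK_comp (fun s => 2 * xi (2 * s)) (fun c => b c 0)); auto. apply Hb; lra.
    - apply (classK_scal 4 (fun s => g (eta s))); [lra | apply classK_comp; auto]. }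
  exists (fun r t => rho (4 * b (2 * xi (2 * r)) t)), gain. split; [|split; [exact Kgain|]].
  { apply (classKL_comp b (fun r => 2 * xi (2 * r)) (fun v => rho (4 * v))); auto.
    apply (classK_comp (fun v => 4 * v) rho); auto. apply classK_scal; [lra | apply classK_id]. }
  intros t x u ht hadm _.
  pose proof (ns_norm_nonneg _ x) as hr. pose proof (ns_norm_nonneg _ u) as hs.
  apply (cont_on_Rplus_le_eps gain); [apply Kgain | exact hs|]. intros e he.
  eapply Rle_trans.
  { apply (norm_phi_le_of_Uc_bound (fun t r s => b r t + g s)) with (e := e); auto.
    intros t' r r' s s' ht' hr' hrr' hs' hss'.
    apply Rplus_le_compat; [apply (classK_le (fun c => b c t')) | apply (classK_le g)]; auto.
    apply (proj1 Hb); auto. }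
  rewrite Rplus_assoc. apply classKL_estimate_split; auto; try lra.
  apply classK_ge0; auto. apply classK_ge0; auto; lra.
Qed.

Section LinearRhoXi.

Variables cr cx : R.
Hypothesis Hcr : forall r, 0 <= r -> rho r = cr * r.
Hypothesis Hcx : forall r, 0 <= r -> xi r = cx * r.

Lemma norm_phi_le_exp_bound M a g : 0 < M -> 0 <= a -> classK g ->
  (forall t x u, 0 <= t -> cs_adm S x u -> Uc u ->
     ns_norm (cs_phi S t x u) <= M * exp (- a * t) * ns_norm x + g (ns_norm u)) ->
  forall t x u, 0 <= t -> cs_adm S x u ->
  ns_norm (cs_phi S t x u) <= 2 * cr * cx * M * exp (- a * t) * ns_norm x +
    (2 * cr * cx * M * ns_norm u + 2 * cr * g (eta (ns_norm u))).
Proof.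
  intros hM ha Hg HUc t x u ht hadm.
  assert (hcr : 0 < cr) by (apply (classK_linear_slope_gt0 rho); auto).
  assert (hcx : 0 < cx) by (apply (classK_linear_slope_gt0 xi); auto).
  pose proof (ns_norm_nonneg _ x) as hr. pose proof (ns_norm_nonneg _ u) as hs.
  apply (cont_on_Rplus_le_eps (fun s => 2 * cr * cx * M * s + 2 * cr * g (eta s))); auto.
  { apply cont_on_Rplus_add; apply cont_on_Rplus_scal; [apply cont_on_Rplus_id|].
    apply cont_on_Rplus_comp; [apply Keta | intros; apply classK_ge0; auto | apply Hg]. }
  intros e he.
  eapply Rle_trans.
  { apply (norm_phi_le_of_Uc_bound (fun t r s => M * exp (- a * t) * r + g s)) with (e := e); auto.
    intros t' r r' s s' _ _ hrr' hs' hss'.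
    pose proof (exp_pos (- a * t')).
    apply Rplus_le_compat; [apply Rmult_le_compat_l; [nra | auto] | apply classK_le; auto]. }
  pose proof (exp_pos (- a * t)) as hE. pose proof (exp_neg_le1 a t ha ht) as hE1.
  assert (hgeta : 0 <= g (eta (ns_norm u + e)))
    by (apply classK_ge0; auto; apply classK_ge0; auto; lra).
  rewrite Hcx by lra.
  rewrite Hcr by (apply Rmult_le_pos; [lra|]; apply Rplus_le_le_0_compat; auto;
                  apply Rmult_le_pos; [nra | apply Rmult_le_pos; lra]).
  set (E := exp (- a * t)) in *.
  (* The |u| + e part of xi(|x| + |u| + e) goes into the gain, using exp(-a t) <= 1. *)
  assert (hMcx : 0 < M * cx) by (apply Rmult_lt_0_compat; lra).
  assert (M * cx * E <= M * cx) by nra.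
  assert (cr * (M * cx * E * (ns_norm u + e)) <= cr * (M * cx * (ns_norm u + e)))
    by (apply Rmult_le_compat_l; [lra|]; apply Rmult_le_compat_r; lra).
  nra.
Qed.

Lemma classKinf_exp_gain k g : 0 < k -> classK g ->
  classKinf (fun s => k * s + 2 * cr * g (eta s)).
Proof.
  intros hk Hg.
  assert (hcr : 0 < 2 * cr) by (pose proof (classK_linear_slope_gt0 rho cr Krho Hcr); lra).
  apply (classKinf_of_ge_linear _ k); auto.
  - apply (classK_add (fun s => k * s) (fun s => 2 * cr * g (eta s))).
    + apply classK_scal; [exact hk | apply classK_id].
    + apply (classK_scal (2 * cr) (fun s => g (eta s))); [exact hcr | apply classK_comp; auto].
  - intros r hr.
    assert (0 <= 2 * cr * g (eta r)).
    { apply Rmult_le_pos; [lra|]. apply classK_ge0; auto. apply classK_ge0; auto. }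
    lra.
Qed.

Lemma expISS_gain_slope_gt0 M : 0 < M -> 0 < 2 * cr * cx * M.
Proof.
  intros hM.
  pose proof (classK_linear_slope_gt0 rho cr Krho Hcr).
  pose proof (classK_linear_slope_gt0 xi cx Kxi Hcx).
  repeat apply Rmult_lt_0_compat; lra.
Qed.

Lemma expISS_of_expISS_wrt : expISS_wrt S Uc -> expISS S.
Proof.
  intros (M & a & g & hM & ha & Hg & HUc).
  exists (2 * cr * cx * M), a, (fun s => 2 * cr * cx * M * s + 2 * cr * g (eta s)).
  split; [apply expISS_gain_slope_gt0; auto|]. split; [exact ha|].
  split; [apply classKinf_exp_gain, Hg; apply expISS_gain_slope_gt0; auto|].
  intros t x u ht hadm _. apply (norm_phi_le_exp_bound M a g); auto; [lra | apply Hg].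
Qed.

Lemma expISS_lin_of_expISS_lin_wrt : expISS_lin_wrt S Uc -> linear_fun eta -> expISS_lin S.
Proof.
  intros (M & a & g & hM & ha & Hg & [cg Hcg] & HUc) [ce Hce].
  exists (2 * cr * cx * M), a, (fun s => 2 * cr * cx * M * s + 2 * cr * g (eta s)).
  split; [apply expISS_gain_slope_gt0; auto|]. split; [exact ha|].
  split; [apply classKinf_exp_gain, Hg; apply expISS_gain_slope_gt0; auto|].
  split.
  - exists (2 * cr * cx * M + 2 * cr * (cg * ce)). intros r hr.
    rewrite Hcg by (apply classK_ge0; auto). rewrite Hce by exact hr. ring.
  - intros t x u ht hadm _. apply (norm_phi_le_exp_bound M a g); auto; [lra | apply Hg].
Qed.

End LinearRhoXi.

End MonotoneSandwich.

Theorem mainTheorem2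
  (S : ControlSystem) (KX : Cone (cs_X S)) (KU : Cone (cs_W S))
  (Uc : cs_W S -> Prop)
  (rho eta xi : R -> R)
  (Hmono : monotone S KX KU)
  (Hrho : classKinf rho)
  (Hi : forall xm x xp : cs_X S, cone_le KX xm x -> cone_le KX x xp ->
          ns_norm x <= rho (ns_norm xm + ns_norm xp))
  (Heta : classKinf eta) (Hxi : classKinf xi)
  (Hii : forall (x : cs_X S) (u : cs_W S) (eps : R), cs_adm S x u -> 0 < eps ->
          exists (xm xp : cs_X S) (um up : cs_W S),
            cs_adm S xm um /\ Uc um /\ cs_adm S xp up /\ Uc up /\
            cone_le KX xm x /\ cone_le KX x xp /\
            cone_le KU um u /\ cone_le KU u up /\
            Rmax (ns_norm um) (ns_norm up) <= eta (ns_norm u + eps) /\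
            Rmax (ns_norm xm) (ns_norm xp) <= xi (ns_norm x + ns_norm u + eps)) :
  (ISS S <-> ISS_wrt S Uc) /\
  (linear_fun rho -> linear_fun xi ->
     (expISS S <-> expISS_wrt S Uc) /\
     (expISS_lin_wrt S Uc -> linear_fun eta -> expISS_lin S)).
Proof.
  destruct Hrho as [Krho _], Heta as [Keta _], Hxi as [Kxi _].
  split.
  - split; [apply ISS_wrt_of_ISS|].
    exact (ISS_of_ISS_wrt S KX KU Uc rho eta xi Hmono Krho Keta Kxi Hi Hii).
  - intros [cr Hcr] [cx Hcx]. split.
    + split; [apply expISS_wrt_of_expISS|].
      exact (expISS_of_expISS_wrt S KX KU Uc rho eta xi Hmono Krho Keta Kxi Hi Hii cr cx Hcr Hcx).
    + exact (expISS_lin_of_expISS_lin_wrt S KX KU Uc rho eta xi Hmono Krho Keta Kxi Hi Hii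
               cr cx Hcr Hcx).
Qed.
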